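(* Let $(X,d)$ be a metric space, $V$ a Banach space, $\varphi$ an evolution semiflow on $X$ and $\Phi$ an evolution cocycle over $\varphi$, and let $C=(\varphi,\Phi)$ be the associated skew-evolution semiflow. Suppose $C$ is uniformly exponentially dichotomic, i.e. there exist two projectors $P_1,P_2$ compatible with $C$, constants $N_1,N_2\ge 1$ and $\nu_1,\nu_2>0$ such that $$e^{\nu_1(t-s)}\|\Phi_1(t,t_0,x)v\|\le N_1\|\Phi_1(s,t_0,x)v\|,\qquad e^{\nu_2(t-s)}\|\Phi_2(s,t_0,x)v\|\le N_2\|\Phi_2(t,t_0,x)v\|$$ for all $t\ge s\ge t_0\ge 0$ and all $(x,v)\in X\times V$. Then $C$ is uniformly polynomially dichotomic, i.e. there exist two projectors $P_1,P_2$ compatible with $C$ and constants $N\ge 1$, $\alpha_1>0$, $\alpha_2>0$ such that $$\|\Phi_1(t,s,x)v\|\le N t^{-\alpha_1}s^{\alpha_1}\|P_1(x)v\|,\qquad \|P_2(x)v\|\le N t^{-\alpha_2}s^{\alpha_2}\|\Phi_2(t,s,x)v\|$$ for all $t\ge s\ge 1$ and all $(x,v)\in X\times V$.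
   Context: Notation: $T=\{(t,t_0)\in\mathbb{R}^2: t\ge t_0\ge 0\}$, $Y=X\times V$, $\mathcal{B}(V)$ the bounded linear operators on $V$, $I$ the identity. An evolution semiflow is a map $\varphi:T\times X\to X$ with $\varphi(t,t,x)=x$ and $\varphi(t,s,\varphi(s,t_0,x))=\varphi(t,t_0,x)$ for all $t\ge s\ge t_0\ge0$, $x\in X$. An evolution cocycle over $\varphi$ is a map $\Phi:T\times X\to\mathcal{B}(V)$ with $\Phi(t,t,x)=I$ and $\Phi(t,s,\varphi(s,t_0,x))\Phi(s,t_0,x)=\Phi(t,t_0,x)$ for all $t\ge s\ge t_0\ge 0$, $x\in X$. The skew-evolution semiflow is $C(t,s,x,v)=(\varphi(t,s,x),\Phi(t,s,x)v)$. A projector on $Y$ is a continuous map $P:Y\to Y$, $P(x,v)=(x,P(x)v)$, where each $P(x)$ is a bounded linear projection on $V$; its complementary projector is $Q(x,v)=(x,v-P(x)v)$. $P$ is invariant relative to $C$ if $P(\varphi(t,s,x))\Phi(t,s,x)=\Phi(t,s,x)P(x)$ for all $(t,s)\in T$, $x\in X$. A projector $P_1$ and its complementary projector $P_2$ are compatible with $C$ if both are invariant relative to $C$ and for every $x$, $P_1(x)$ and $P_2(x)$ commute with $P_1(x)P_2(x)=0$. Write $\Phi_k(t,t_0,x)=\Phi(t,t_0,x)P_k(x)$, $k=1,2$. *)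

From HB Require Import structures.
From mathcomp Require Import all_boot all_order all_algebra.
From mathcomp Require Import all_classical all_reals all_analysis.
Set Implicit Arguments. Unset Strict Implicit. Unset Printing Implicit Defensive.
Import Order.TTheory GRing.Theory Num.Theory.
Import numFieldNormedType.Exports.
Local Open Scope classical_set_scope.
Local Open Scope ring_scope.

Section Defs.
Variables (R : realType) (X : metricType R) (V : completeNormedModType R).

Definition bounded_linear (A : V -> V) : Prop :=
  [/\ (forall u w, A (u + w) = A u + A w),
      (forall (a : R) u, A (a *: u) = a *: A u) &
      (exists M : R, forall u, `|A u| <= M * `|u|)].

Definition evolution_semiflow (phi : R -> R -> X -> X) : Prop :=
  (forall t x, 0 <= t -> phi t t x = x) /\
  (forall t s t0 x, 0 <= t0 -> t0 <= s -> s <= t ->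
     phi t s (phi s t0 x) = phi t t0 x).

Definition evolution_cocycle (phi : R -> R -> X -> X)
  (Phi : R -> R -> X -> V -> V) : Prop :=
  [/\ (forall t t0 x, 0 <= t0 -> t0 <= t -> bounded_linear (Phi t t0 x)),
      (forall t x v, 0 <= t -> Phi t t x v = v) &
      (forall t s t0 x v, 0 <= t0 -> t0 <= s -> s <= t ->
         Phi t s (phi s t0 x) (Phi s t0 x v) = Phi t t0 x v)].

(* projector on Y = X * V : (x,v) |-> (x, P x v), continuous, each P x a
   bounded linear projection *)
Definition projector (P : X -> V -> V) : Prop :=
  (forall x, bounded_linear (P x) /\ (forall v, P x (P x v) = P x v)) /\
  continuous (fun y : X * V => (y.1, P y.1 y.2)).

Definition invariant (phi : R -> R -> X -> X) (Phi : R -> R -> X -> V -> V)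
  (P : X -> V -> V) : Prop :=
  forall t s x v, 0 <= s -> s <= t -> P (phi t s x) (Phi t s x v) = Phi t s x (P x v).

Definition compatible (phi : R -> R -> X -> X) (Phi : R -> R -> X -> V -> V)
  (P1 P2 : X -> V -> V) : Prop :=
  [/\ projector P1,
      (forall x v, P2 x v = v - P1 x v),
      projector P2,
      invariant phi Phi P1 /\ invariant phi Phi P2 &
      (forall x v, P1 x (P2 x v) = P2 x (P1 x v) /\ P1 x (P2 x v) = 0)].

Definition unif_exp_dichotomic (phi : R -> R -> X -> X)
  (Phi : R -> R -> X -> V -> V) : Prop :=
  exists P1 P2 : X -> V -> V, compatible phi Phi P1 P2 /\
  exists N1 N2 nu1 nu2 : R, [/\ 1 <= N1, 1 <= N2, 0 < nu1, 0 < nu2 &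
    forall t s t0 x v, 0 <= t0 -> t0 <= s -> s <= t ->
      expR (nu1 * (t - s)) * `|Phi t t0 x (P1 x v)| <= N1 * `|Phi s t0 x (P1 x v)| /\
      expR (nu2 * (t - s)) * `|Phi s t0 x (P2 x v)| <= N2 * `|Phi t t0 x (P2 x v)|].

Definition unif_poly_dichotomic (phi : R -> R -> X -> X)
  (Phi : R -> R -> X -> V -> V) : Prop :=
  exists P1 P2 : X -> V -> V, compatible phi Phi P1 P2 /\
  exists N a1 a2 : R, [/\ 1 <= N, 0 < a1, 0 < a2 &
    forall t s x v, 1 <= s -> s <= t ->
      `|Phi t s x (P1 x v)| <= N * t `^ (- a1) * s `^ a1 * `|P1 x v| /\
      `|P2 x v| <= N * t `^ (- a2) * s `^ a2 * `|Phi t s x (P2 x v)|].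

End Defs.

From mathcomp Require Import all_boot all_order all_algebra.
From mathcomp Require Import all_classical all_reals all_analysis.
From mathcomp Require Import lra.
Set Implicit Arguments. Unset Strict Implicit. Unset Printing Implicit Defensive.
Import Order.TTheory GRing.Theory Num.Theory.
Import numFieldNormedType.Exports.
Local Open Scope ring_scope.

(* On [1, +oo) the logarithm is 1-Lipschitz, so ln t - ln s <= t - s; hence an
   exponential rate nu turns into the polynomial rate (s/t)^nu, and the
   exponential dichotomy estimates (taken at t0 = s) become polynomial ones
   with the same projectors, exponents nu_i and constant max N1 N2. *)

Section ExpToPoly.
Variable R : realType.

Lemma ln_sub_le_sub (s t : R) : 1 <= s -> s <= t -> ln t - ln s <= t - s.
Proof.
move=> s1 st.
have s0 : 0 < s by apply: lt_le_trans s1; rewrite ltr01.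
have t0 : 0 < t by apply: lt_le_trans st.
rewrite -ln_div ?posrE //.
have := expR_ge1Dx (ln (t / s)); rewrite lnK ?posrE ?divr_gt0 // => ln_le.
have : t / s - 1 <= t - s.
  rewrite -[1](divff (lt0r_neq0 s0)) -mulrBl ler_pdivrMr //; nra.
lra.
Qed.

Lemma expRN_le_powR_ratio (a s t : R) : 0 <= a -> 1 <= s -> s <= t ->
  expR (- (a * (t - s))) <= t `^ (- a) * s `^ a.
Proof.
move=> a0 s1 st.
have s0 : 0 < s by apply: lt_le_trans s1; rewrite ltr01.
have t0 : 0 < t by apply: lt_le_trans st.
rewrite /powR (gt_eqF t0) (gt_eqF s0) -expRD ler_expR.
have := ln_sub_le_sub s1 st; nra.
Qed.

Lemma exp_bound_le_powR_bound (a N M s t u w : R) :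
  0 <= a -> 1 <= s -> s <= t -> 0 <= N -> N <= M -> 0 <= w ->
  expR (a * (t - s)) * u <= N * w -> u <= M * t `^ (- a) * s `^ a * w.
Proof.
move=> a0 s1 st N0 NM w0 exp_bound.
have E0 := expR_gt0 (a * (t - s)).
have Ei0 : 0 <= (expR (a * (t - s)))^-1 by rewrite invr_ge0 ltW.
have poly := expRN_le_powR_ratio a0 s1 st; rewrite expRN in poly.
rewrite -[u](mulKf (lt0r_neq0 E0)) -!mulrA (mulrA (t `^ _)).
apply: (le_trans (ler_wpM2l Ei0 exp_bound)); rewrite mulrCA.
apply: ler_pM => //; first exact: mulr_ge0.
by apply: ler_pM.
Qed.

End ExpToPoly.

Theorem mainTheorem1 (R : realType) (X : metricType R) (V : completeNormedModType R)
  (phi : R -> R -> X -> X) (Phi : R -> R -> X -> V -> V) :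
  evolution_semiflow phi -> evolution_cocycle phi Phi ->
  unif_exp_dichotomic phi Phi -> unif_poly_dichotomic phi Phi.
Proof.
move=> _ [_ Phi_id _] [P1 [P2 [compat [N1 [N2 [nu1 [nu2 [N11 N21 nu10 nu20 H]]]]]]]].
exists P1, P2; split => //.
exists (Num.max N1 N2), nu1, nu2; split => //; first by rewrite le_max N11.
move=> t s x v s1 st.
have s0 : 0 <= s by apply: le_trans s1; rewrite ler01.
have [H1 H2] := H t s s x v s0 (lexx s) st.
rewrite Phi_id // in H1; rewrite Phi_id // in H2.
have N10 : 0 <= N1 by apply: le_trans N11; rewrite ler01.
have N20 : 0 <= N2 by apply: le_trans N21; rewrite ler01.
have N1M : N1 <= Num.max N1 N2 by rewrite le_max lexx.
have N2M : N2 <= Num.max N1 N2 by rewrite le_max lexx orbT.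
split; [exact: exp_bound_le_powR_bound (ltW nu10) s1 st N10 N1M (normr_ge0 _) H1
       |exact: exp_bound_le_powR_bound (ltW nu20) s1 st N20 N2M (normr_ge0 _) H2].
Qed.
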